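(* Let $\mathcal{G}_{k-1}=(V,E_{k-1})$ be an unweighted simple directed graph, let $e_k=(u_k,v_k)$ with $u_k\neq v_k$, $u_k,v_k\in V$, and $e_k\notin E_{k-1}$, and let $\mathcal{G}_k=(V,E_{k-1}\cup\{e_k\})$. Let $\Delta\mathcal{F}_k=\mathcal{F}(\mathcal{G}_k)\setminus\mathcal{F}(\mathcal{G}_{k-1})$ and $$\mathcal{F}(\mathcal{G}'_{k-1})=\{\phi\in\mathcal{F}(\mathcal{G}_{k-1}) : r_\phi(u_k)=u_k,\ r_\phi(v_k)\neq u_k\}.$$ Then for every spanning converging forest $\phi\in\Delta\mathcal{F}_k$, the forest $\phi'=\phi\setminus\{e_k\}$ belongs to $\mathcal{F}(\mathcal{G}'_{k-1})$, and the map $\phi\mapsto\phi\setminus\{e_k\}$ is a bijection from $\Delta\mathcal{F}_k$ onto $\mathcal{F}(\mathcal{G}'_{k-1})$.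
   Context: A rooted converging tree is a weakly connected digraph without cycles in which one node (the root) has out-degree $0$ and every other node has out-degree $1$ (an isolated node is such a tree rooted at itself). A spanning converging forest of a digraph $\mathcal{G}=(V,E)$ is a spanning subgraph (containing all of $V$ and a subset of $E$, identified with its edge set) whose weakly connected components are rooted converging trees. $\mathcal{F}(\mathcal{G})$ denotes the set of all spanning converging forests of $\mathcal{G}$. For a forest $\phi$ and node $i$, $r_\phi(i)$ denotes the root of the tree of $\phi$ containing $i$. *)

From mathcomp Require Import all_boot.
Set Implicit Arguments. Unset Strict Implicit. Unset Printing Implicit Defensive.

Section Forests.
Variable V : finType.
Implicit Types (E F : {set V * V}) (x y r : V).

(* a simple digraph: no self loops (edge set => no multi-edges) *)
Definition simple_digraph E : bool := [forall x, (x, x) \notin E].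

Definition erel F : rel V := fun x y => (x, y) \in F.
Definition wrel F : rel V := fun x y => ((x, y) \in F) || ((y, x) \in F).

Definition wcomp F x : {set V} := [set y | connect (wrel F) x y].

Definition outdeg F x : nat := #|[set y | (x, y) \in F]|.

(* no directed cycle (including self-loops) *)
Definition dacyclic F : bool :=
  [forall x, forall y, ((x, y) \in F) ==> ~~ connect (erel F) y x].

Definition conv_tree_comp F x : bool :=
  [exists r in wcomp F x,
     (outdeg F r == 0) &&
     [forall y in wcomp F x, (y != r) ==> (outdeg F y == 1)]].

(* spanning converging forest of the digraph (V,E), identified with its edge set *)
Definition sc_forest E F : bool :=
  [&& F \subset E, dacyclic F & [forall x, conv_tree_comp F x]].

Definition forest_root F x : V :=
  odflt x [pick r in wcomp F x | outdeg F r == 0].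

End Forests.

From mathcomp Require Import all_boot.
Set Implicit Arguments. Unset Strict Implicit. Unset Printing Implicit Defensive.

(* A set of edges is a spanning converging forest exactly when it is
   acyclic and every node has out-degree at most 1; its roots are its sinks,
   and the root of x is the unique sink reachable from x.  Deleting the edge
   (u, v) from such a forest makes u a root, and v is not in the tree of u
   since otherwise v ->* u -> v would be a cycle.  Conversely, adding (u, v)
   to a forest in which u is a root keeps out-degrees at most 1, and a new
   cycle would have to go through (u, v), giving a path from v to u, i.e.
   r(v) = u. *)

Section ConvergingForests.
Variable V : finType.
Implicit Types (E F G : {set V * V}) (x y z r : V).

Definition functional F := forall x y z, (x, y) \in F -> (x, z) \in F -> y = z.

Lemma functional_outdeg F : functional F <-> forall x, outdeg F x <= 1.
Proof.
split=> [Ffun x | Fle1 x y z Fxy Fxz].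
  by apply/card_le1_eqP => y z; rewrite !inE => Fxy Fxz; apply: Ffun Fxz Fxy.
by have /card_le1_eqP := Fle1 x; apply; rewrite inE.
Qed.

Lemma functional_subset F G : G \subset F -> functional F -> functional G.
Proof. by move=> /subsetP GF Ffun x y z /GF Fxy /GF; apply: Ffun. Qed.

Lemma outdeg0P F x : reflect (forall y, (x, y) \notin F) (outdeg F x == 0).
Proof.
rewrite cards_eq0; apply: (iffP eqP) => [F0 y | noF].
  by apply/negP => Fxy; have := in_set0 y; rewrite -F0 inE Fxy.
by apply/setP => y; rewrite !inE (negbTE (noF y)).
Qed.

Lemma dacyclicP F :
  reflect (forall x y, (x, y) \in F -> ~~ connect (erel F) y x) (dacyclic F).
Proof.
apply: (iffP forallP) => [Facyc x y | Facyc x].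
  exact/implyP/(forallP (Facyc x)).
by apply/forallP => y; apply/implyP/Facyc.
Qed.

Lemma connect_erel_subset F G x y :
  F \subset G -> connect (erel F) x y -> connect (erel G) x y.
Proof.
by move=> /subsetP FG; apply: connect_sub => a b Fab; apply/connect1/FG.
Qed.

Lemma connect_erel_wrel F x y : connect (erel F) x y -> connect (wrel F) x y.
Proof.
apply: connect_sub => a b Fab; apply: connect1.
by rewrite /wrel -/(erel F a b) Fab.
Qed.

Lemma dacyclic_subset F G : G \subset F -> dacyclic F -> dacyclic G.
Proof.
move=> GF /dacyclicP Facyc; apply/dacyclicP => x y /(subsetP GF) Fxy.
by apply: contra (Facyc x y Fxy); apply: connect_erel_subset.
Qed.

Lemma sink_connect F x y : outdeg F x == 0 -> connect (erel F) x y -> y = x.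
Proof.
move=> /outdeg0P x_sink /connectP [[|z p] /=]; first by move=> _ ->.
by rewrite /erel (negbTE (x_sink z)).
Qed.

(* A sink reachable from x minimizes the number of nodes reachable from it:
   an edge r -> s would strictly shrink that set, since r is not reachable
   from s. *)
Lemma exists_sink F x :
  dacyclic F -> exists2 r, connect (erel F) x r & outdeg F r == 0.
Proof.
move=> /dacyclicP Facyc; pose reach y := [set z | connect (erel F) y z].
have [r x_r r_min] := arg_minnP (fun y => #|reach y|) (connect0 (erel F) x).
exists r => //; apply/outdeg0P => s; apply/negP => Frs.
have r_s : connect (erel F) r s by apply: connect1.
have := r_min s (connect_trans x_r r_s); apply/negP; rewrite -ltnNge.
apply/proper_card/properP; split.
  by apply/subsetP => z; rewrite !inE; apply: connect_trans.
by exists r; rewrite !inE ?connect0 ?(negbTE (Facyc r s Frs)).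
Qed.

Lemma functional_connect_step F x y r :
  functional F -> (x, y) \in F -> connect (erel F) x r -> outdeg F r == 0 ->
  connect (erel F) y r.
Proof.
move=> Ffun Fxy /connectP [[|z p] /= x_p ->] r_sink.
  by move/outdeg0P: r_sink => /(_ y); rewrite Fxy.
case/andP: x_p => Fxz z_p; apply/connectP.
by exists p; rewrite -?(Ffun _ _ _ Fxz Fxy).
Qed.

Lemma functional_wconnect_sink F x y r :
  functional F -> connect (wrel F) x y -> connect (erel F) x r ->
  outdeg F r == 0 -> connect (erel F) y r.
Proof.
move=> Ffun /connectP [p x_p ->] x_r r_sink.
elim: p x x_p x_r => [|z p IHp] x //= /andP [/orP [Fxz | Fzx] z_p] x_r.
  exact: IHp z_p (functional_connect_step Ffun Fxz x_r r_sink).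
exact: IHp z_p (connect_trans (connect1 Fzx) x_r).
Qed.

Lemma functional_sink_unique F x r1 r2 :
  functional F -> connect (erel F) x r1 -> connect (erel F) x r2 ->
  outdeg F r1 == 0 -> outdeg F r2 == 0 -> r1 = r2.
Proof.
move=> Ffun x_r1 x_r2 r1_sink r2_sink; apply/esym/(sink_connect r1_sink).
exact: functional_wconnect_sink Ffun (connect_erel_wrel x_r1) x_r2 r2_sink.
Qed.

Lemma functional_conv_tree_comp F x :
  functional F -> dacyclic F -> conv_tree_comp F x.
Proof.
move=> Ffun Facyc; have [r x_r r_sink] := exists_sink x Facyc.
apply/existsP; exists r; rewrite inE connect_erel_wrel //= r_sink.
apply/forall_inP => y; rewrite inE => x_y; apply/implyP => y_ne_r.
rewrite eqn_leq (proj1 (functional_outdeg F) Ffun y) lt0n /=.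
apply: contra y_ne_r => y_sink; apply/eqP/esym/(sink_connect y_sink).
exact: functional_wconnect_sink Ffun x_y x_r r_sink.
Qed.

Lemma sc_forestP E F :
  sc_forest E F <-> [/\ F \subset E, dacyclic F & functional F].
Proof.
split=> [/and3P [FE Facyc /forallP Ftree] | [FE Facyc Ffun]]; last first.
  rewrite /sc_forest FE Facyc; apply/forallP => x.
  exact: functional_conv_tree_comp.
split=> //; apply/functional_outdeg => x.
have /existsP [r /and3P [_ /eqP r_sink /forall_inP r_root]] := Ftree x.
have [-> | x_ne_r] := eqVneq x r; first by rewrite r_sink.
have x_x : x \in wcomp F x by rewrite inE connect0.
by move/implyP/(_ x_ne_r)/eqP: (r_root x x_x) => ->.
Qed.

Lemma sc_forest_subset E E' F G :
  sc_forest E F -> G \subset F -> G \subset E' -> sc_forest E' G.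
Proof.
case/sc_forestP => _ Facyc Ffun GF GE'.
apply/sc_forestP; split=> //; first exact: dacyclic_subset Facyc.
exact: functional_subset Ffun.
Qed.

Lemma forest_root_sink E F x :
  sc_forest E F ->
  (forest_root F x \in wcomp F x) && (outdeg F (forest_root F x) == 0).
Proof.
case/and3P => _ _ /forallP /(_ x) /existsP [r /andP [x_r /andP [r_sink _]]].
by rewrite /forest_root; case: pickP => [// | /(_ r)]; rewrite x_r r_sink.
Qed.

Lemma connect_forest_root E F x :
  sc_forest E F -> connect (erel F) x (forest_root F x).
Proof.
move=> Fforest; have /andP [x_root root_sink] := forest_root_sink x Fforest.
have /sc_forestP [_ _ Ffun] := Fforest.
have wsym : connect_sym (wrel F).
  by apply: sym_connect_sym => a b; rewrite /wrel orbC.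
rewrite inE wsym in x_root.
exact: functional_wconnect_sink Ffun x_root (connect0 _ _) root_sink.
Qed.

Lemma forest_root_connect E F x y :
  sc_forest E F -> connect (erel F) x y -> forest_root F x = forest_root F y.
Proof.
move=> Fforest x_y; have /sc_forestP [_ _ Ffun] := Fforest.
apply: (functional_sink_unique Ffun (connect_forest_root x Fforest)).
- exact: connect_trans x_y (connect_forest_root y Fforest).
- by case/andP: (forest_root_sink x Fforest).
- by case/andP: (forest_root_sink y Fforest).
Qed.

Lemma forest_root_id E F x :
  sc_forest E F -> outdeg F x == 0 -> forest_root F x = x.
Proof.
by move=> Fforest /sink_connect; apply; apply: connect_forest_root Fforest.
Qed.

Lemma connect_setU1 F e x y :
  connect (erel (e |: F)) x y ->
  connect (erel F) x y \/
  connect (erel F) x e.1 /\ connect (erel (e |: F)) e.2 y.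
Proof.
case/connectP => p x_p ->; elim: p x x_p => [|z p IHp] x /=; first by left.
case/andP => /setU1P [xz_e | Fxz] z_p.
  subst e; right; split; first exact: connect0.
  by apply/connectP; exists p.
have x_z : connect (erel F) x z by apply: connect1.
case: (IHp z z_p) => [z_y | [z_e1 e2_y]].
  by left; apply: connect_trans z_y.
by right; split=> //; apply: connect_trans z_e1.
Qed.

Lemma dacyclic_setU1 F e :
  dacyclic F -> ~~ connect (erel F) e.2 e.1 -> dacyclic (e |: F).
Proof.
move=> /dacyclicP Facyc no_back.
have no_back' : ~~ connect (erel (e |: F)) e.2 e.1.
  by apply: contra no_back => /connect_setU1 [| []].
apply/dacyclicP => x y /setU1P [xy_e | Fxy].
  by move: no_back'; rewrite -xy_e.
apply/negP => /connect_setU1 [| [y_e1 e2_x]]; first exact/negP/Facyc.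
case/negP: no_back'; apply: connect_trans e2_x _.
apply: connect_trans (connect1 (setU1r e Fxy)) _.
exact: connect_erel_subset (subsetUr _ _) y_e1.
Qed.

Lemma functional_setU1 F u v :
  functional F -> outdeg F u == 0 -> functional ((u, v) |: F).
Proof.
move=> Ffun /outdeg0P u_sink x y z.
case/setU1P => [[-> ->] | Fxy] /setU1P.
  by case=> [[->] | Fuz]; have := u_sink z; rewrite ?Fuz.
case=> [[xu ->] | Fxz]; last exact: Ffun Fxy Fxz.
by have := u_sink y; rewrite -xu Fxy.
Qed.

Lemma sc_forest_setU1_mem E F e :
  sc_forest (e |: E) F -> ~~ sc_forest E F -> e \in F.
Proof.
move=> Fforest; apply: contraNT => e_notin_F; have /and3P [FE _ _] := Fforest.
apply: sc_forest_subset Fforest (subxx F) _; apply/subsetP => f Ff.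
by have /setU1P [f_e | //] := subsetP FE f Ff; rewrite -f_e Ff in e_notin_F.
Qed.

Lemma sc_forest_setD1 E F e : sc_forest (e |: E) F -> sc_forest E (F :\ e).
Proof.
move=> Fforest; have /and3P [FE _ _] := Fforest.
apply: sc_forest_subset Fforest (subD1set F e) _.
apply/subsetP => f /setD1P [f_ne_e Ff].
by have /setU1P [f_e | //] := subsetP FE f Ff; rewrite f_e eqxx in f_ne_e.
Qed.

Lemma forest_setD1_roots E F u v : sc_forest E F -> (u, v) \in F ->
  forest_root (F :\ (u, v)) u = u /\ forest_root (F :\ (u, v)) v != u.
Proof.
move=> Fforest Fuv; set G := F :\ (u, v).
have GF : G \subset F by apply: subD1set.
have Gforest : sc_forest F G := sc_forest_subset Fforest GF GF.
have /sc_forestP [_ /dacyclicP Facyc Ffun] := Fforest.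
have u_sink : outdeg G u == 0.
  apply/outdeg0P => y; rewrite !inE; apply/negP => /andP [uy_ne Fuy].
  by rewrite (Ffun _ _ _ Fuy Fuv) eqxx in uy_ne.
split; first exact: forest_root_id Gforest u_sink.
apply/eqP => v_root; case/negP: (Facyc u v Fuv).
apply: connect_erel_subset GF _; rewrite -v_root.
exact: connect_forest_root Gforest.
Qed.

Lemma sc_forest_setU1 E F u v :
  sc_forest E F -> forest_root F u = u -> forest_root F v != u ->
  sc_forest ((u, v) |: E) ((u, v) |: F).
Proof.
move=> Fforest u_root v_root; have /sc_forestP [FE Facyc Ffun] := Fforest.
have u_sink : outdeg F u == 0.
  by rewrite -{1}u_root; case/andP: (forest_root_sink u Fforest).
apply/sc_forestP; split; first exact: setUS.
  apply: dacyclic_setU1 Facyc _; apply: contra v_root => v_u.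
  by rewrite (forest_root_connect Fforest v_u) u_root.
exact: functional_setU1.
Qed.

End ConvergingForests.

Theorem lemma5p1 (V : finType) (E : {set V * V}) (u v : V) :
  simple_digraph E -> u != v -> (u, v) \notin E ->
  let E' := (u, v) |: E in
  let DeltaF := [set F : {set V * V} | sc_forest E' F && ~~ sc_forest E F] in
  let Fp := [set F : {set V * V} |
               [&& sc_forest E F, forest_root F u == u & forest_root F v != u]] in
  (forall F, F \in DeltaF -> (F :\ (u, v)) \in Fp) /\
  {in DeltaF &, injective (fun F => F :\ (u, v))} /\
  [set F :\ (u, v) | F in DeltaF] = Fp.
Proof.
move=> _ _ uv_notin_E E' DeltaF Fp.
have uv_in F : F \in DeltaF -> (u, v) \in F.
  by rewrite inE => /andP [Fforest]; apply: sc_forest_setU1_mem Fforest.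
have Delta_Fp F : F \in DeltaF -> F :\ (u, v) \in Fp.
  move=> F_Delta; have := F_Delta; rewrite inE => /andP [Fforest _].
  have [u_root v_root] := forest_setD1_roots Fforest (uv_in F F_Delta).
  by rewrite inE u_root eqxx v_root sc_forest_setD1.
split=> //; split.
  move=> F1 F2 /uv_in F1uv /uv_in F2uv /= eq12.
  by rewrite -(setD1K F1uv) eq12 setD1K.
apply/setP => F; apply/imsetP/idP => [[G /Delta_Fp + ->] // | F_Fp].
have := F_Fp; rewrite inE => /and3P [Fforest /eqP u_root v_root].
have uv_notin_F : (u, v) \notin F.
  apply: contra uv_notin_E; move/and3P: Fforest => [/subsetP FE _ _].
  exact: FE.
exists ((u, v) |: F); last by rewrite setU1K.
rewrite inE sc_forest_setU1 //=; apply: contra uv_notin_E.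
by case/and3P => /subsetP FE _ _; apply/FE/setU11.
Qed.
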